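(* Let $\mathbb X$ be the stationary Markov chain on $I\cup\mathcal E$ with transition matrix $P^\pi$ and stationary law $\pi$, let $\mathbb Y^{(\mathcal A)}$ be the stationary Markov chain on $I^2\times\mathcal E^*$ with transition matrix $\mathcal A$ and stationary law $\eta$, and let $\mathbb G$ be an i.i.d. sequence on $\mathcal E$ with law $\pi(\delta\mid\mathcal E)=\pi(\delta)/\pi(\mathcal E)$, so $h(\mathbb G)=-\sum_{\delta\in\mathcal E}\pi(\delta\mid\mathcal E)\log\pi(\delta\mid\mathcal E)$. Then $$h(\mathbb X)=\pi(I)\,h(\mathbb Y^{(\mathcal A)})+\pi(\mathcal E)^2h(\mathbb G)-\pi(I)\pi(\mathcal E)\log\pi(I)-\pi(\mathcal E)^2\log\pi(\mathcal E).$$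
   Context: $I$ and $\mathcal E$ are disjoint countable sets, $\mathcal E\ne\emptyset$; $P$ is a stochastic matrix on $I\cup\mathcal E$ with all $\epsilon\in\mathcal E$ absorbing, irreducible restriction $P_I$ to $I$, $\sum_{i\in I}P(i,\mathcal E)>0$ where $P(i,\mathcal E)=\sum_{\epsilon\in\mathcal E}P(i,\epsilon)$, and $\mathcal E$ reached a.s. from every $i\in I$. $\mu$ is a quasi-stationary distribution of $P_I$: a probability on $I$ with $\mu^tP_I=\gamma\mu^t$, $\gamma=\sum_{i,j\in I}\mu(i)P(i,j)\in(0,1)$. $\pi$ is the probability on $I\cup\mathcal E$ with $\pi(i)=\gamma\mu(i)$ ($i\in I$), $\pi(\epsilon)=\sum_{i\in I}\mu(i)P(i,\epsilon)$ ($\epsilon\in\mathcal E$); $\pi(I)=\gamma$, $\pi(\mathcal E)=1-\gamma$. $P^\pi$ equals $P$ on rows $i\in I$ and has every row $\epsilon\in\mathcal E$ equal to $\pi$; $\pi$ is stationary for $P^\pi$. Let $\mathcal E^*=\mathcal E\cup\{o\}$, $o\notin I\cup\mathcal E$. The matrix $\mathcal A$ on $I^2\times\mathcal E^*$: $\mathcal A((i,j,\delta),(l,k,\epsilon))=0$ if $l\ne j$, $=P(j,k)$ if $l=j,\epsilon=o$, $=P(j,\epsilon)\mu(k)$ if $l=j,\epsilon\in\mathcal E$; its stationary law is $\eta(i,j,\delta)=\mu(i)P(i,j)\mathbf 1(\delta=o)+\mu(i)P(i,\delta)\mu(j)\mathbf 1(\delta\in\mathcal E)$. For a stationary Markov chain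 $\mathbb Z$ with transition matrix $R$ and stationary law $\nu$, $h(\mathbb Z)=-\sum_a\nu(a)\sum_bR(a,b)\log R(a,b)$ (with $0\log0=0$). *)

From HB Require Import structures.
From mathcomp Require Import all_boot all_order all_algebra.
From mathcomp Require Import all_classical all_reals.
From mathcomp Require Import topology normedtype sequences esum exp ereal.
From Stdlib Require Import Relations.
Set Implicit Arguments. Unset Strict Implicit. Unset Printing Implicit Defensive.
Import Order.TTheory GRing.Theory Num.Theory.
Local Open Scope classical_set_scope.
Local Open Scope ring_scope.

Section Defs.
Variable R : realType.

Definition xlogx (x : R) : R := if x == 0 then 0 else x * ln x.

(* entropy of a stationary Markov chain with stationary law nu and
   transition matrix Q:  - sum_a nu(a) sum_b Q(a,b) log Q(a,b),
   a sum of nonnegative terms, hence taken in the extended reals *)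
Definition mc_entropy (S : choiceType) (nu : S -> R) (Q : S -> S -> R) : \bar R :=
  \esum_(a in [set: S]) \esum_(b in [set: S]) (nu a * - xlogx (Q a b))%:E.

Definition iid_entropy (S : choiceType) (p : S -> R) : \bar R :=
  \esum_(d in [set: S]) (- xlogx (p d))%:E.

Variables (I E : countType).
Notation St := (I + E)%type.

(* probability, starting from i, of not being absorbed in E by time n *)
Fixpoint surv (P : St -> St -> R) (n : nat) (i : I) : \bar R :=
  match n with
  | 0 => 1%E
  | n.+1 => \esum_(j in [set: I]) ((P (inl i) (inl j))%:E * surv P n j)%E
  end.

(* pi(epsilon) = sum_i mu(i) P(i, epsilon) (a finite sum, <= 1) *)
Definition piE (P : St -> St -> R) (mu : I -> R) (e : E) : R :=
  fine (\esum_(i in [set: I]) (mu i * P (inl i) (inr e))%:E).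

Definition pi_law (P : St -> St -> R) (mu : I -> R) (gamma : R) (x : St) : R :=
  match x with
  | inl i => gamma * mu i
  | inr e => piE P mu e
  end.

Definition Ppi (P : St -> St -> R) (mu : I -> R) (gamma : R) (x y : St) : R :=
  match x with
  | inl _ => P x y
  | inr _ => pi_law P mu gamma y
  end.

(* E^* = option E, with None playing the role of o *)
Definition Amat (P : St -> St -> R) (mu : I -> R)
    (u v : (I * I) * option E) : R :=
  let: ((_, j), _) := u in
  let: ((l, k), eps) := v in
  if l != j then 0 else
  match eps with
  | None => P (inl j) (inl k)
  | Some e => P (inl j) (inr e) * mu k
  end.

Definition eta_law (P : St -> St -> R) (mu : I -> R)
    (u : (I * I) * option E) : R :=
  let: ((i, j), d) := u in
  match d with
  | None => mu i * P (inl i) (inl j)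
  | Some e => mu i * P (inl i) (inr e) * mu j
  end.

Definition pi_condE (P : St -> St -> R) (mu : I -> R) (gamma : R) (e : E) : R :=
  piE P mu e / (1 - gamma).

End Defs.

From Pilot Require Import Defs.
From HB Require Import structures.
From mathcomp Require Import all_boot all_order all_algebra.
From mathcomp Require Import all_classical all_reals.
From mathcomp Require Import topology normedtype sequences esum exp ereal.
From mathcomp Require Import ring.
From Stdlib Require Import Relations.
Set Implicit Arguments. Unset Strict Implicit. Unset Printing Implicit Defensive.
Import Order.TTheory GRing.Theory Num.Theory.
Local Open Scope classical_set_scope.
Local Open Scope ring_scope.

(* All entropies are sums of nonnegative terms in [\bar R], so they can be
   split, exchanged and factored with no summability assumption.  Rows of
   [P^pi] indexed by [E] all equal [pi], hence
   [h(X) = gamma * sum_i mu(i) H(P(i,.)) + (1 - gamma) * H(pi)], and [H(pi)]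
   splits over [I + E] into [gamma H(mu) + (1 - gamma) H(pi(.|E))] plus the
   entropy of [(gamma, 1 - gamma)].  The row of [A] out of [(i, j, delta)] is
   [P(j,.)] on [I] next to the product law [P(j, eps) mu(k)], so its entropy is
   [H(P(j,.)) + P(j, E) H(mu)]; quasi-stationarity makes [mu] the marginal of
   [eta] on the second coordinate, whence
   [h(Y) = sum_j mu(j) H(P(j,.)) + (1 - gamma) H(mu)]. *)

Section NonnegativeSums.
Variable R : realType.
Local Open Scope ereal_scope.

Lemma esum_ge_term (T : choiceType) (S : set T) (a : T -> \bar R) (t : T) :
  (forall s, 0 <= a s) -> S t -> a t <= \esum_(s in S) a s.
Proof.
move=> a0 St; apply: esum_ge; exists [set t]; last by rewrite fsbig_set1.
by split; [exact: finite_set1 | move=> s ->].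
Qed.

Lemma esum_le1_term (T : choiceType) (p : T -> R) (t : T) :
  (forall s, 0 <= p s)%R -> \esum_(s in [set: T]) (p s)%:E = 1 -> (p t <= 1)%R.
Proof.
by move=> p0 p1; rewrite -lee_fin -p1; apply: esum_ge_term => // s; rewrite lee_fin.
Qed.

Lemma esum_EFin_ge0 (T : choiceType) (S : set T) (f : T -> R) :
  (forall t, 0 <= f t)%R -> 0 <= \esum_(t in S) (f t)%:E.
Proof. by move=> f0; apply: esum_ge0 => t _; rewrite lee_fin. Qed.

Lemma ge0_esumZl_EFin (T : choiceType) (S : set T) (r : R) (a : T -> \bar R) :
  (0 <= r)%R -> (forall s, 0 <= a s) ->
  \esum_(s in S) (r%:E * a s) = r%:E * \esum_(s in S) a s.
Proof.
move=> r0 a0; rewrite /esum -ereal_supZl //; last first.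
  by apply/set0P; exists 0, set0; [exact: fsets_set0 | rewrite fsbig_set0].
congr ereal_sup; apply/seteqP; split => x /=.
- by move=> [X SX <-]; exists (\sum_(s \in X) a s); [exists X | rewrite ge0_mule_fsumr].
- by move=> [_ [X SX <-] <-]; exists X => //; rewrite ge0_mule_fsumr.
Qed.

Lemma ge0_esumZl (T : choiceType) (S : set T) (k : \bar R) (a : T -> \bar R) :
  0 <= k -> (forall s, 0 <= a s) ->
  \esum_(s in S) (k * a s) = k * \esum_(s in S) a s.
Proof.
case: k => [r | |] //= k0 a0; first by rewrite ge0_esumZl_EFin.
have [a_eq0 | ] := pselect (forall s, S s -> a s = 0).
  by rewrite !esum1 ?mule0 // => s /a_eq0 ->; rewrite mule0.
move=> /existsNP [t /not_implyP [St /eqP at0]].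
have at_gt0 : 0 < a t by rewrite lt0e at0 a0.
rewrite [RHS]gt0_mulye; last by apply: (lt_le_trans at_gt0); exact: esum_ge_term.
apply/eqP; rewrite eq_le leey /= -{1}(gt0_mulye at_gt0).
by apply: (esum_ge_term (a := fun s => +oo * a s)) => // s; exact: mule_ge0.
Qed.

Lemma ge0_esumZr (T : choiceType) (S : set T) (k : \bar R) (a : T -> \bar R) :
  0 <= k -> (forall s, 0 <= a s) ->
  \esum_(s in S) (a s * k) = (\esum_(s in S) a s) * k.
Proof.
by move=> k0 a0; rewrite muleC -ge0_esumZl //; apply: eq_esum => s _; rewrite muleC.
Qed.

Lemma fineK_le1 (x : \bar R) : 0 <= x -> x <= 1 -> (fine x)%:E = x.
Proof. by move=> x0 x1; rewrite fineK // ge0_fin_numE // (le_lt_trans x1) ?ltry. Qed.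

Lemma esum_sumT (A B : choiceType) (f : (A + B)%type -> \bar R) :
  (forall x, 0 <= f x) ->
  \esum_(x in [set: (A + B)%type]) f x =
  \esum_(a in [set: A]) f (inl a) + \esum_(b in [set: B]) f (inr b).
Proof.
move=> f0; rewrite (esumID (range inl)) // setTI.
have -> : [set: (A + B)%type] `&` ~` range inl = range inr.
  apply/seteqP; split => [[a [_ /= Na] | b _] | _ [b _ <-]] //=.
  - by exfalso; apply: Na; exists a.
  - by exists b.
  - by split => // -[].
by rewrite !esum_image //; move=> ? ? _ _ [].
Qed.

Lemma esum_pairT (A B : choiceType) (f : (A * B)%type -> \bar R) :
  (forall x, 0 <= f x) ->
  \esum_(x in [set: (A * B)%type]) f x =
  \esum_(a in [set: A]) \esum_(b in [set: B]) f (a, b).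
Proof.
move=> f0; rewrite esum_esum //.
have -> : [set: A] `*`` (fun=> [set: B]) = [set: (A * B)%type] by apply/seteqP.
by apply: eq_esum => -[].
Qed.

Lemma esum_optionT (B : choiceType) (f : option B -> \bar R) :
  (forall x, 0 <= f x) ->
  \esum_(x in [set: option B]) f x = f None + \esum_(b in [set: B]) f (Some b).
Proof.
move=> f0; rewrite (esumID [set None]) // setTI esum_set1 //.
have -> : [set: option B] `&` ~` [set None] = range Some.
  apply/seteqP; split => [[b _ | [_ /(_ erefl)]] | _ [b _ <-]] //=.
  by exists b.
by rewrite esum_image //; move=> ? ? _ _ [].
Qed.

Lemma exchange_esum (A B : choiceType) (f : A -> B -> \bar R) :
  (forall a b, 0 <= f a b) ->
  \esum_(a in [set: A]) \esum_(b in [set: B]) f a b =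
  \esum_(b in [set: B]) \esum_(a in [set: A]) f a b.
Proof.
move=> f0; rewrite -(esum_pairT (f := fun x => f x.1 x.2)); last by move=> [].
rewrite -(esum_pairT (f := fun x => f x.2 x.1)); last by move=> [].
rewrite (reindex_esum [set: (B * A)%type] _ (fun x => (x.2, x.1))) //.
split=> [[] // | [? ?] [? ?] _ _ [-> ->] // | [a b] _]; by exists (b, a).
Qed.

Lemma esum_eq_term (A : choiceType) (f : A -> \bar R) (t : A) :
  (forall x, x != t -> f x = 0) -> 0 <= f t ->
  \esum_(x in [set: A]) f x = f t.
Proof.
move=> f_eq0 ft0; rewrite (esumID [set t]); last first.
  by move=> x _; have [-> | /f_eq0 ->] := eqVneq x t.
by rewrite setTI esum_set1 // esum1 ?adde0 // => x [_ /eqP /f_eq0].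
Qed.

End NonnegativeSums.

Lemma mulr_in01 (R : numDomainType) (a b : R) :
  0 <= a <= 1 -> 0 <= b <= 1 -> 0 <= a * b <= 1.
Proof. by move=> /andP[a0 a1] /andP[b0 b1]; rewrite mulr_ge0 ?mulr_ile1. Qed.

Lemma subr_in01 (R : numDomainType) (x : R) : 0 <= x <= 1 -> 0 <= 1 - x <= 1.
Proof. by move=> /andP[x0 x1]; rewrite subr_ge0 x1 gerBl. Qed.

Section Entropy.
Variable R : realType.

Lemma xlogx0 : xlogx (0 : R) = 0.
Proof. by rewrite /xlogx eqxx. Qed.

Lemma gt0_xlogx (x : R) : 0 < x -> xlogx x = x * ln x.
Proof. by rewrite /xlogx => /gt_eqF ->. Qed.

Lemma xlogx_le0 (x : R) : 0 <= x <= 1 -> xlogx x <= 0.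
Proof.
by move=> /andP[x0 x1]; rewrite /xlogx; case: eqP => // _; rewrite mulr_ge0_le0 ?ln_le0.
Qed.

Lemma EFin_oppr_xlogx_ge0 (x : R) : 0 <= x <= 1 -> (0 <= (- xlogx x)%:E)%E.
Proof. by move=> x01; rewrite lee_fin oppr_ge0 xlogx_le0. Qed.

Lemma xlogxM (a b : R) : 0 <= a -> 0 <= b ->
  xlogx (a * b) = a * xlogx b + b * xlogx a.
Proof.
rewrite le_eqVlt eq_sym => /predU1P[-> _ | a0].
  by rewrite /xlogx !(mul0r, eqxx, mulr0, addr0).
rewrite le_eqVlt eq_sym => /predU1P[-> | b0].
  by rewrite /xlogx !(mulr0, eqxx, mul0r, add0r).
by rewrite !gt0_xlogx ?mulr_gt0 // lnM ?posrE //; ring.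
Qed.

Local Open Scope ereal_scope.

Lemma iid_entropy_ge0 (T : choiceType) (p : T -> R) :
  (forall s, 0 <= p s <= 1)%R -> 0 <= iid_entropy p.
Proof. by move=> p01; apply: esum_ge0 => s _; exact: EFin_oppr_xlogx_ge0. Qed.

Lemma mc_entropyE (S : choiceType) (nu : S -> R) (Q : S -> S -> R) :
  (forall a, 0 <= nu a)%R -> (forall a b, 0 <= Q a b <= 1)%R ->
  mc_entropy nu Q = \esum_(a in [set: S]) (nu a)%:E * iid_entropy (Q a).
Proof.
move=> nu0 Q01; apply: eq_esum => a _; rewrite -ge0_esumZl_EFin // => b.
exact: EFin_oppr_xlogx_ge0.
Qed.

Lemma iid_entropyZ (T : choiceType) (c : R) (p : T -> R) :
  (0 <= c <= 1)%R -> (forall s, 0 <= p s <= 1)%R ->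
  iid_entropy (fun s => c * p s)%R =
  c%:E * iid_entropy p + (\esum_(s in [set: T]) (p s)%:E) * (- xlogx c)%:E.
Proof.
move=> c01 p01; have /andP[c0 _] := c01.
have p0 s : (0 <= p s)%R by case/andP: (p01 s).
transitivity (\esum_(s in [set: T])
    (c%:E * (- xlogx (p s))%:E + (p s)%:E * (- xlogx c)%:E)).
  by apply: eq_esum => s _; rewrite xlogxM // -!EFinM -EFinD opprD !mulrN.
rewrite esumD => [|s _|s _]; last 2 first.
- by rewrite mule_ge0 ?EFin_oppr_xlogx_ge0 ?lee_fin.
- by rewrite mule_ge0 ?EFin_oppr_xlogx_ge0 ?lee_fin.
rewrite ge0_esumZl_EFin ?ge0_esumZr ?EFin_oppr_xlogx_ge0 // => s.
exact: EFin_oppr_xlogx_ge0.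
Qed.

Lemma iid_entropy_prod (A B : choiceType) (p : A -> R) (q : B -> R) :
  (forall a, 0 <= p a <= 1)%R -> (forall b, 0 <= q b <= 1)%R ->
  \esum_(a in [set: A]) \esum_(b in [set: B]) (- xlogx (p a * q b))%:E =
  (\esum_(b in [set: B]) (q b)%:E) * iid_entropy p +
  (\esum_(a in [set: A]) (p a)%:E) * iid_entropy q.
Proof.
move=> p01 q01; have p0 a : (0 <= p a)%R by case/andP: (p01 a).
have sumq_ge0 : 0 <= \esum_(b in [set: B]) (q b)%:E.
  by apply: esum_EFin_ge0 => b; case/andP: (q01 b).
rewrite (eq_esum (fun a _ => iid_entropyZ (p01 a) q01)) esumD => [|a _|a _].
- rewrite ge0_esumZr ?iid_entropy_ge0 // ge0_esumZl // => [|a]; first by rewrite addeC.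
  exact: EFin_oppr_xlogx_ge0.
- by rewrite mule_ge0 ?lee_fin ?iid_entropy_ge0.
- by rewrite mule_ge0 ?EFin_oppr_xlogx_ge0.
Qed.

Lemma mixture_entropy_regroup (g : R) (a b c : \bar R) :
  (0 < g < 1)%R -> 0 <= a -> 0 <= b -> 0 <= c ->
  g%:E * a + (1 - g)%:E * ((g%:E * b + (- xlogx g)%:E) +
                           ((1 - g)%:E * c + (- xlogx (1 - g))%:E)) =
  g%:E * (a + (1 - g)%:E * b) + ((1 - g) ^+ 2)%:E * c
  - (g * (1 - g) * ln g)%:E - ((1 - g) ^+ 2 * ln (1 - g))%:E.
Proof.
move=> /andP[g_gt0 g_lt1] a0 b0 c0; have g'_gt0 : (0 < 1 - g)%R by rewrite subr_gt0.
have g01 : (0 <= g <= 1)%R by rewrite !ltW.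
have gE : 0 <= g%:E by rewrite lee_fin ltW.
have g'E : 0 <= (1 - g)%:E by rewrite lee_fin ltW.
have LgE := EFin_oppr_xlogx_ge0 g01.
have Lg'E := EFin_oppr_xlogx_ge0 (subr_in01 g01).
rewrite !ge0_muleDr ?adde_ge0 ?mule_ge0 // !muleA -!EFinM.
rewrite !gt0_xlogx // -!EFinN !addeA [in LHS](addeAC _ _ (_ * c)).
by congr (_ + _%:E * _ + _%:E * _ + _%:E + _%:E); ring.
Qed.

End Entropy.

Section QuasiStationaryChain.
Variables (R : realType) (I E : countType).
Variables (P : (I + E)%type -> (I + E)%type -> R) (mu : I -> R) (gamma : R).
Hypothesis P_ge0 : forall x y, 0 <= P x y.
Hypothesis P_sum1 : forall x, (\esum_(y in [set: (I + E)%type]) (P x y)%:E)%E = 1%E.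
Hypothesis mu_ge0 : forall i, 0 <= mu i.
Hypothesis mu_sum1 : (\esum_(i in [set: I]) (mu i)%:E)%E = 1%E.
Hypothesis gammaE : gamma%:E = (\esum_(i in [set: I]) \esum_(j in [set: I])
                                  (mu i * P (inl i) (inl j))%:E)%E.
Hypothesis gamma_gt0 : 0 < gamma.
Hypothesis gamma_lt1 : gamma < 1.
Hypothesis mu_qsd : forall j : I,
  (\esum_(i in [set: I]) (mu i * P (inl i) (inl j))%:E)%E = (gamma * mu j)%:E.

Let gamma01 : 0 <= gamma <= 1. Proof. by rewrite !ltW. Qed.

Lemma P01 x y : 0 <= P x y <= 1.
Proof. by rewrite P_ge0 (esum_le1_term _ (P_ge0 x) (P_sum1 x)). Qed.

Lemma mu01 i : 0 <= mu i <= 1.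
Proof. by rewrite mu_ge0 (esum_le1_term _ mu_ge0 mu_sum1). Qed.

Local Open Scope ereal_scope.

Lemma esum_P_inl_inr (i : I) :
  \esum_(j in [set: I]) (P (inl i) (inl j))%:E +
  \esum_(e in [set: E]) (P (inl i) (inr e))%:E = 1.
Proof. by rewrite -(P_sum1 (inl i)) [RHS]esum_sumT // => y; rewrite lee_fin. Qed.

Definition PtoE (i : I) : R := fine (\esum_(e in [set: E]) (P (inl i) (inr e))%:E).

Lemma PtoE_EFin i : (PtoE i)%:E = \esum_(e in [set: E]) (P (inl i) (inr e))%:E.
Proof.
apply: fineK_le1; first exact: esum_EFin_ge0.
by rewrite -(esum_P_inl_inr i) leeDr ?esum_EFin_ge0.
Qed.

Lemma PtoE_ge0 i : (0 <= PtoE i)%R.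
Proof. by rewrite -lee_fin PtoE_EFin esum_EFin_ge0. Qed.

Lemma piE_EFin e :
  (Defs.piE P mu e)%:E = \esum_(i in [set: I]) (mu i * P (inl i) (inr e))%:E.
Proof.
apply: fineK_le1; first by apply: esum_EFin_ge0 => i; rewrite mulr_ge0.
rewrite -mu_sum1; apply: le_esum => i _; rewrite lee_fin ler_piMr //.
by case/andP: (P01 (inl i) (inr e)).
Qed.

Lemma sum_mu_PtoE : \esum_(i in [set: I]) (mu i * PtoE i)%:E = (1 - gamma)%:E.
Proof.
have split_mu : gamma%:E + \esum_(i in [set: I]) (mu i * PtoE i)%:E = 1.
  rewrite gammaE -mu_sum1 -esumD => [|i _|i _]; last 2 first.
  - by apply: esum_EFin_ge0 => j; rewrite mulr_ge0.
  - by rewrite lee_fin mulr_ge0 ?PtoE_ge0.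
  apply: eq_esum => i _.
  rewrite -[RHS]mule1 -(esum_P_inl_inr i) ge0_muleDr ?esum_EFin_ge0 //.
  by rewrite -PtoE_EFin -EFinM -ge0_esumZl_EFin // => j; rewrite lee_fin.
by rewrite -[LHS](@addeK _ gamma%:E) // [X in X - _]addeC split_mu EFinB.
Qed.

Lemma sum_piE : \esum_(e in [set: E]) (Defs.piE P mu e)%:E = (1 - gamma)%:E.
Proof.
rewrite -sum_mu_PtoE (eq_esum (fun e _ => piE_EFin e)) -exchange_esum; last first.
  by move=> i e; rewrite lee_fin mulr_ge0.
apply: eq_esum => i _; rewrite EFinM PtoE_EFin -ge0_esumZl_EFin // => e.
by rewrite lee_fin.
Qed.

Lemma piE_pi_condE e : Defs.piE P mu e = ((1 - gamma) * pi_condE P mu gamma e)%R.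
Proof. by rewrite /pi_condE mulrC divfK // subr_eq0 gt_eqF. Qed.

Lemma pi_condE_ge0 e : (0 <= pi_condE P mu gamma e)%R.
Proof.
apply: divr_ge0; last by rewrite subr_ge0 ltW.
by rewrite -lee_fin piE_EFin; apply: esum_EFin_ge0 => i; rewrite mulr_ge0.
Qed.

Lemma sum_pi_condE : \esum_(e in [set: E]) (pi_condE P mu gamma e)%:E = 1.
Proof.
have gamma'_ge0 : (0 <= 1 - gamma)%R by rewrite subr_ge0 ltW.
transitivity (\esum_(e in [set: E]) ((1 - gamma)^-1%:E * (Defs.piE P mu e)%:E)).
  by apply: eq_esum => e _; rewrite -EFinM mulrC.
rewrite ge0_esumZl_EFin ?invr_ge0 // => [|e]; last first.
  by rewrite lee_fin piE_pi_condE mulr_ge0 ?pi_condE_ge0.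
by rewrite sum_piE -EFinM mulVf // subr_eq0 gt_eqF.
Qed.

Lemma pi_condE01 e : (0 <= pi_condE P mu gamma e <= 1)%R.
Proof. by rewrite pi_condE_ge0 (esum_le1_term _ pi_condE_ge0 sum_pi_condE). Qed.

Lemma pi_law01 x : (0 <= pi_law P mu gamma x <= 1)%R.
Proof.
by case: x => [i | e] /=; rewrite ?piE_pi_condE mulr_in01 ?subr_in01 ?mu01 ?pi_condE01.
Qed.

Lemma Ppi01 x y : (0 <= Ppi P mu gamma x y <= 1)%R.
Proof. by case: x => [i | e]; rewrite /= ?P01 ?pi_law01. Qed.

Lemma entropy_pi_law : iid_entropy (pi_law P mu gamma) =
  (gamma%:E * iid_entropy mu + (- xlogx gamma)%:E) +
  ((1 - gamma)%:E * iid_entropy (pi_condE P mu gamma) + (- xlogx (1 - gamma))%:E).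
Proof.
rewrite /iid_entropy esum_sumT => [|x]; last exact/EFin_oppr_xlogx_ge0/pi_law01.
congr (_ + _); first by rewrite [LHS](iid_entropyZ gamma01 mu01) mu_sum1 mul1e.
rewrite (eq_esum (fun e _ => congr1 (fun r => (- xlogx r)%:E) (piE_pi_condE e))).
by rewrite [LHS](iid_entropyZ (subr_in01 gamma01) pi_condE01) sum_pi_condE mul1e.
Qed.

Definition step_entropy : \bar R :=
  \esum_(i in [set: I]) (mu i)%:E * iid_entropy (P (inl i)).

Lemma step_entropy_ge0 : 0 <= step_entropy.
Proof.
by apply: esum_ge0 => i _; rewrite mule_ge0 ?lee_fin ?(iid_entropy_ge0 (P01 (inl i))).
Qed.

Lemma entropy_Ppi : mc_entropy (pi_law P mu gamma) (Ppi P mu gamma) =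
  gamma%:E * step_entropy + (1 - gamma)%:E * iid_entropy (pi_law P mu gamma).
Proof.
have pi_ge0 x : (0 <= pi_law P mu gamma x)%R by case/andP: (pi_law01 x).
have Hpi_ge0 := iid_entropy_ge0 pi_law01.
rewrite mc_entropyE // => [|x y]; last exact: Ppi01.
rewrite esum_sumT => [|x]; last by rewrite mule_ge0 ?lee_fin ?(iid_entropy_ge0 (Ppi01 x)).
congr (_ + _).
  rewrite /step_entropy -ge0_esumZl_EFin ?(ltW gamma_gt0) // => [|i]; last first.
    by rewrite mule_ge0 ?lee_fin ?mu_ge0 ?(iid_entropy_ge0 (P01 (inl i))).
  by apply: eq_esum => i _; rewrite /= EFinM muleA.
transitivity (\esum_(e in [set: E])
    (Defs.piE P mu e)%:E * iid_entropy (pi_law P mu gamma)) => //.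
by rewrite ge0_esumZr ?sum_piE // => e; rewrite lee_fin (pi_ge0 (inr e)).
Qed.

Lemma Amat01 u v : (0 <= Amat P mu u v <= 1)%R.
Proof.
case: u v => [[i j] d] [[l k] [e|]] /=; case: (l != j);
  by rewrite ?lexx ?ler01 ?P01 ?mulr_in01 ?P01 ?mu01.
Qed.

Lemma iid_entropy_Amat i j d : iid_entropy (Amat P mu ((i, j), d)) =
  iid_entropy (P (inl j)) + (PtoE j)%:E * iid_entropy mu.
Proof.
have L0 u v := EFin_oppr_xlogx_ge0 (Amat01 u v).
rewrite /iid_entropy esum_pairT // esum_pairT => [|[l k]]; last first.
  by apply: esum_ge0 => eps _; exact: L0.
rewrite (esum_eq_term (t := j)) => [|l lj|]; first last.
- by apply: esum_ge0 => k _; apply: esum_ge0 => eps _; exact: L0.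
- by apply: esum1 => k _; apply: esum1 => eps _; rewrite /= (negPf lj) xlogx0 oppr0.
transitivity (\esum_(k in [set: I]) ((- xlogx (P (inl j) (inl k)))%:E +
    \esum_(e in [set: E]) (- xlogx (mu k * P (inl j) (inr e)))%:E)).
  apply: eq_esum => k _; rewrite esum_optionT //.
  by rewrite /= eqxx; congr (_ + _); apply: eq_esum => e _; rewrite mulrC.
rewrite esumD => [|k _|k _]; last 2 first.
- exact/EFin_oppr_xlogx_ge0/P01.
- by apply: esum_ge0 => e _; exact/EFin_oppr_xlogx_ge0/mulr_in01/P01/mu01.
rewrite (iid_entropy_prod mu01 (fun e => P01 _ (inr e))) mu_sum1 mul1e -PtoE_EFin.
rewrite [in RHS]esum_sumT => [|y]; last exact/EFin_oppr_xlogx_ge0/P01.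
by rewrite [RHS]addeAC addeA.
Qed.

Lemma eta_law_ge0 u : (0 <= eta_law P mu u)%R.
Proof. by case: u => [[i j] [e|]]; rewrite /= !mulr_ge0. Qed.

Lemma eta_law_marginal j :
  \esum_(i in [set: I]) \esum_(d in [set: option E]) (eta_law P mu ((i, j), d))%:E =
  (mu j)%:E.
Proof.
transitivity (\esum_(i in [set: I]) ((mu i * P (inl i) (inl j))%:E +
    (\esum_(e in [set: E]) (mu i * P (inl i) (inr e))%:E) * (mu j)%:E)).
  apply: eq_esum => i _; rewrite esum_optionT => [|d]; last by rewrite lee_fin eta_law_ge0.
  by rewrite -ge0_esumZr ?lee_fin // => e; rewrite lee_fin mulr_ge0.
rewrite esumD => [|i _|i _]; last 2 first.
- by rewrite lee_fin mulr_ge0.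
- by rewrite mule_ge0 ?lee_fin ?esum_EFin_ge0 // => e; rewrite mulr_ge0.
rewrite mu_qsd ge0_esumZr ?lee_fin // => [|i]; last first.
  by apply: esum_EFin_ge0 => e; rewrite mulr_ge0.
rewrite exchange_esum => [|i e]; last by rewrite lee_fin mulr_ge0.
rewrite (eq_esum (fun e _ => esym (piE_EFin e))) sum_piE -EFinM -EFinD.
by congr EFin; ring.
Qed.

Lemma entropy_Amat : mc_entropy (eta_law P mu) (Amat P mu) =
  step_entropy + (1 - gamma)%:E * iid_entropy mu.
Proof.
have Hmu_ge0 := iid_entropy_ge0 mu01.
have HP_ge0 j := iid_entropy_ge0 (P01 (inl j)).
have HE_ge0 j : 0 <= (PtoE j)%:E * iid_entropy mu by rewrite mule_ge0 ?lee_fin ?PtoE_ge0.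
have term_ge0 u : 0 <= (eta_law P mu u)%:E * iid_entropy (Amat P mu u).
  by rewrite mule_ge0 ?lee_fin ?eta_law_ge0 ?(iid_entropy_ge0 (Amat01 u)).
rewrite mc_entropyE => [||u v]; [|exact: eta_law_ge0|exact: Amat01].
rewrite esum_pairT // esum_pairT => [|[i j]]; last exact: esum_ge0.
rewrite exchange_esum => [|i j]; last exact: esum_ge0.
transitivity (\esum_(j in [set: I])
    (mu j)%:E * (iid_entropy (P (inl j)) + (PtoE j)%:E * iid_entropy mu)).
  apply: eq_esum => j _; rewrite -eta_law_marginal -ge0_esumZr ?adde_ge0 // => [|i].
    apply: eq_esum => i _; rewrite -ge0_esumZr ?adde_ge0 // => [|d].
      by apply: eq_esum => d _; rewrite iid_entropy_Amat.
    by rewrite lee_fin eta_law_ge0.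
  by apply: esum_EFin_ge0 => d; exact: eta_law_ge0.
rewrite (eq_esum (fun j _ => ge0_muleDr _ (HP_ge0 j) (HE_ge0 j))).
rewrite esumD => [|j _|j _]; last 2 first.
- by rewrite mule_ge0 ?lee_fin.
- by rewrite mule_ge0 ?lee_fin.
congr (_ + _); rewrite -sum_mu_PtoE -ge0_esumZr // => [|j]; last first.
  by rewrite lee_fin mulr_ge0 ?PtoE_ge0.
by apply: eq_esum => j _; rewrite muleA.
Qed.

End QuasiStationaryChain.

Theorem proposition5 (R : realType) (I E : countType)
  (P : (I + E)%type -> (I + E)%type -> R) (mu : I -> R) (gamma : R) :
  (* P is a stochastic matrix *)
  (forall x y, 0 <= P x y) ->
  (forall x, (\esum_(y in [set: (I + E)%type]) (P x y)%:E)%E = 1%E) ->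
  (* every epsilon in E is absorbing *)
  (forall e : E, P (inr e) (inr e) = 1) ->
  (* E nonempty *)
  (exists e : E, True) ->
  (* P_I irreducible *)
  (forall i j : I, clos_refl_trans I (fun a b => 0 < P (inl a) (inl b)) i j) ->
  (* sum_i P(i, E) > 0 *)
  (exists (i : I) (e : E), 0 < P (inl i) (inr e)) ->
  (* E is reached a.s. from every i in I *)
  (forall i : I, (fun n => surv P n i) @ \oo --> (0%:E : \bar R)) ->
  (* mu is a probability on I *)
  (forall i, 0 <= mu i) ->
  (\esum_(i in [set: I]) (mu i)%:E)%E = 1%E ->
  (* gamma = sum_{i,j in I} mu(i) P(i,j), in (0,1) *)
  gamma%:E = (\esum_(i in [set: I]) \esum_(j in [set: I])
                 (mu i * P (inl i) (inl j))%:E)%E ->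
  0 < gamma < 1 ->
  (* mu is quasi-stationary: mu^t P_I = gamma mu^t *)
  (forall j : I,
     (\esum_(i in [set: I]) (mu i * P (inl i) (inl j))%:E)%E = (gamma * mu j)%:E) ->
  mc_entropy (pi_law P mu gamma) (Ppi P mu gamma) =
    (gamma%:E * mc_entropy (eta_law P mu) (Amat P mu)
     + ((1 - gamma) ^+ 2)%:E * iid_entropy (pi_condE P mu gamma)
     - (gamma * (1 - gamma) * ln gamma)%:E
     - ((1 - gamma) ^+ 2 * ln (1 - gamma))%:E)%E.
Proof.
move=> P_ge0 P_sum1 _ _ _ _ _ mu_ge0 mu_sum1 gammaE gamma01 mu_qsd.
have /andP[gamma_gt0 gamma_lt1] := gamma01.
rewrite entropy_Ppi // entropy_pi_law // (entropy_Amat (gamma := gamma)) //.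
apply: mixture_entropy_regroup => //.
- exact: step_entropy_ge0.
- exact: iid_entropy_ge0 (mu01 mu_ge0 mu_sum1).
- exact: iid_entropy_ge0 (pi_condE01 P_ge0 P_sum1 mu_ge0 mu_sum1 gammaE gamma_lt1).
Qed.
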